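(* Let $n\ge3$, $\gamma<1$ real, and $z_1,\dots,z_n\in\mathbb{C}$ not all zero with $\frac{\gamma}{n}\big(\sum_\ell z_\ell\big)^2=\sum_\ell z_\ell^2$. Then for each $N$ with $3\le N\le n$ there exists a full lift of $(z_1,\dots,z_n;\gamma)$ in $\mathbb{R}^N$. Moreover, for $N=3$: suppose $$n\sum_\ell|z_\ell|^2+(\gamma-2)\Big|\sum_\ell z_\ell\Big|^2\neq0 .$$ Put $\rho=\frac12\sum_\ell|z_\ell|^2-\frac{\gamma}{2n}\big|\sum_\ell z_\ell\big|^2$, $\sigma=\gamma\rho/(1-\gamma)$, $u_1=\sum_\ell\alpha_\ell/\sqrt{n(\sigma+\rho)}$, $u_2=\sum_\ell\beta_\ell/\sqrt{n(\sigma+\rho)}$, $u_3=\sqrt{1-u_1^2-u_2^2}$, let $A$ be the $3\times n$ real matrix with rows $(\alpha_1,\dots,\alpha_n)$, $(\beta_1,\dots,\beta_n)$, $(1,\dots,1)$, and $\vec b=u_3\,(\sigma u_1,\ \sigma u_2,\ \sqrt{n(\sigma+\rho)})^t$. Then $u_3>0$, $A$ has rank $3$, and the lifts in $\mathbb{R}^3$ are exactly the matrices $W$ with rows $(\alpha_\ell)$, $(\beta_\ell)$, $\vec t^{\,t}$ where $\vec t=\pm A^t(AA^t)^{-1}\vec b$, i.e. $\vec t$ is the minimal Euclidean norm solution of $A\vec t=\pm\vec b$; in particular the lift in $\mathbb{R}^3$ is unique up to the sign $\vec t\mapsto-\vec t$.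
   Context: Write $z_\ell=\alpha_\ell+i\beta_\ell$ with $\alpha_\ell,\beta_\ell$ real. For $N\ge3$, a lift of $(z_1,\dots,z_n;\gamma)$ in $\mathbb{R}^N$ is a real $N\times n$ matrix $W=(\vec x_1|\cdots|\vec x_n)$ whose first row is $(\alpha_1,\dots,\alpha_n)$ and second row is $(\beta_1,\dots,\beta_n)$ (so $z_\ell$ is the orthogonal projection $y\mapsto y_1+iy_2$ of $\vec x_\ell$), such that for some unit vector $\vec u\in\mathbb{R}^N$ and reals $\rho>0$, $\sigma$ with $\rho+\sigma>0$ and $\gamma=\sigma/(\sigma+\rho)$: $WW^t=\rho I_N+\sigma\vec u\vec u^{\,t}$ and $\sum_\ell\vec x_\ell=\sqrt{n(\sigma+\rho)}\,\vec u$. (Equivalently, $W$ is the matrix of a configured star in $\mathbb{R}^N$ with internal vertex $0$ whose external vertices project to the $z_\ell$, with invariant $\sigma/(\sigma+\rho)=\gamma$.) The lift is full if the external vertices do not lie in a proper linear subspace, i.e. $W$ has rank $N$. *)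

(* Real numbers are modelled by an arbitrary real closed field
   R : rcfType (the statement is purely algebraic: sqrt, ranks, inverses).
   A complex number z_l is given by its real and imaginary parts al l, be l. *)
From HB Require Import structures.
From mathcomp Require Import all_boot all_order all_algebra.
Set Implicit Arguments. Unset Strict Implicit. Unset Printing Implicit Defensive.
Import Order.TTheory GRing.Theory Num.Theory.
Local Open Scope ring_scope.

Section Defs.
Variable R : rcfType.

Definition cadd (x y : R * R) : R * R := (x.1 + y.1, x.2 + y.2).
Definition cmul (x y : R * R) : R * R := (x.1 * y.1 - x.2 * y.2, x.1 * y.2 + x.2 * y.1).
Definition cscale (r : R) (x : R * R) : R * R := (r * x.1, r * x.2).
Definition cnorm2 (x : R * R) : R := x.1 ^+ 2 + x.2 ^+ 2.

Definition zof n (al be : 'I_n -> R) (l : 'I_n) : R * R := (al l, be l).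
Definition csum n (al be : 'I_n -> R) : R * R := (\sum_l al l, \sum_l be l).
Definition csumsq n (al be : 'I_n -> R) : R * R :=
  (\sum_l (cmul (zof al be l) (zof al be l)).1,
   \sum_l (cmul (zof al be l) (zof al be l)).2).

Definition is_lift (N n : nat) (al be : 'I_n -> R) (g : R) (W : 'M[R]_(N, n)) : Prop :=
  (forall (i : 'I_N) (j : 'I_n), val i = 0%N -> W i j = al j) /\
  (forall (i : 'I_N) (j : 'I_n), val i = 1%N -> W i j = be j) /\
  exists (u : 'cV[R]_N) (rho sigma : R),
    [/\ u^T *m u = 1%:M, 0 < rho, 0 < sigma + rho,
        g = sigma / (sigma + rho) &
        W *m W^T = rho%:M + sigma *: (u *m u^T) /\
        W *m const_mx 1 = Num.sqrt (n%:R * (sigma + rho)) *: u].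

Definition is_full_lift (N n : nat) (al be : 'I_n -> R) (g : R) (W : 'M[R]_(N, n)) : Prop :=
  is_lift al be g W /\ \rank W = N.

Definition rows3 n (al be t : 'I_n -> R) : 'M[R]_(3, n) :=
  \matrix_(i < 3, j < n) (if val i == 0%N then al j else if val i == 1%N then be j else t j).

End Defs.

From HB Require Import structures.
From mathcomp Require Import all_boot all_order all_algebra.
From mathcomp Require Import ring lra.
Import Order.TTheory GRing.Theory Num.Theory.
Local Open Scope ring_scope.
Set Implicit Arguments. Unset Strict Implicit. Unset Printing Implicit Defensive.

(* 1. Generic facts: Cauchy-Schwarz; a vector of the span of 1, x, y is
      determined by its moments; entrywise reading of the Gram conditions;
      stacking of orthogonal blocks; rho I + sigma u u^T is invertible (so
      lifts are full); orthogonal completion inside R^n.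
   2. Moments: the hypothesis sum z^2 = g/n (sum z)^2 and Cauchy-Schwarz for
      the centred vectors give (2 - g) |sum z|^2 <= n sum |z|^2, whence
      rho > 0, u1^2 + u2^2 <= 1, and the rows al, be have Gram matrix
      rho I + sigma u u^T for u = (u1, u2).
   3. Existence: if u3 > 0, al, be are completed by the combination tmin of
      1, al, be with the required moments; if u3 = 0, A = (al; be; 1) has
      rank <= 2.  The block is then completed by vectors orthogonal to A.
   4. For N = 3 and u3 > 0, the parameters of a lift are forced and its third
      row has the moments of +-tmin, hence equals +-tmin = +-A^T (A A^T)^-1 b. *)

Definition i0 : 'I_3 := Ordinal (isT : (0 < 3)%N).
Definition i1 : 'I_3 := Ordinal (isT : (1 < 3)%N).
Definition i2 : 'I_3 := Ordinal (isT : (2 < 3)%N).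

Lemma sum_ord3 (V : zmodType) (F : 'I_3 -> V) : \sum_i F i = F i0 + F i1 + F i2.
Proof.
rewrite !big_ord_recr big_ord0 /= add0r.
by congr (F _ + F _ + F _); apply: val_inj.
Qed.

Lemma sqr_eq_sign (D : idomainType) (a b : D) :
  a ^+ 2 = b ^+ 2 -> exists2 e : D, (e = 1 \/ e = -1) & a = e * b.
Proof.
move=> /eqP; rewrite eqf_sqr => /orP[/eqP-> | /eqP->].
  by exists 1; [left | rewrite mul1r].
by exists (-1); [right | rewrite mulN1r].
Qed.

Section DotProduct.
Variables (R : realFieldType) (n : nat).
Implicit Types (x y v w : 'I_n -> R).

Definition dot x y : R := \sum_j x j * y j.

Lemma dotC x y : dot x y = dot y x.
Proof. by apply: eq_bigr => j _; rewrite mulrC. Qed.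

Lemma eq_dot x x' y y' : x =1 x' -> y =1 y' -> dot x y = dot x' y'.
Proof. by move=> xx' yy'; apply: eq_bigr => j _; rewrite xx' yy'. Qed.

Lemma dot_ge0 x : 0 <= dot x x.
Proof. by apply: sumr_ge0 => j _; rewrite -expr2 sqr_ge0. Qed.

Lemma dot_eq0 x : dot x x = 0 -> forall j, x j = 0.
Proof.
have sq_ge0 i : 0 <= x i * x i by rewrite -expr2 sqr_ge0.
move=> x0 j; have /eqP := psumr_eq0P (fun i _ => sq_ge0 i) x0 (i := j) isT.
by rewrite mulf_eq0 orbb => /eqP.
Qed.

Lemma sum_affine (c0 c1 c2 : R) x y :
  \sum_j (c0 + c1 * x j + c2 * y j) = c0 * n%:R + c1 * \sum_j x j + c2 * \sum_j y j.
Proof.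
by rewrite !big_split /= -!mulr_sumr sumr_const card_ord mulr_natr.
Qed.

Lemma dot_affine (c0 c1 c2 : R) x y v :
  dot (fun j => c0 + c1 * x j + c2 * y j) v =
  c0 * \sum_j v j + c1 * dot x v + c2 * dot y v.
Proof. by rewrite /dot !mulr_sumr -!big_split /=; apply: eq_bigr => j _; ring. Qed.

Lemma dotZr (c : R) x y : dot x (fun j => c * y j) = c * dot x y.
Proof. by rewrite /dot mulr_sumr; apply: eq_bigr => j _; ring. Qed.

Lemma dot_comb2 (a b : R) x y :
  dot (fun j => a * x j + b * y j) (fun j => a * x j + b * y j) =
  a ^+ 2 * dot x x + 2 * a * b * dot x y + b ^+ 2 * dot y y.
Proof.
rewrite /dot !mulr_sumr -!big_split /=; apply: eq_bigr => j _; ring.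
Qed.

(* A vector v in the span of 1, x, y is determined, among all vectors, by its
   sum, its inner products with x and y, and its norm: if w shares these, then
   <v, w> = |v|^2 = |w|^2, so |w - v|^2 = 0. *)
Lemma affine_norm_unique (c0 c1 c2 : R) x y v w :
  v =1 (fun j => c0 + c1 * x j + c2 * y j) ->
  \sum_j w j = \sum_j v j -> dot x w = dot x v -> dot y w = dot y v ->
  dot w w = dot v v -> w =1 v.
Proof.
move=> vE w_sum x_w y_w w_w.
have v_w : dot v w = dot v v.
  by rewrite (eq_dot vE (frefl w)) (eq_dot vE (frefl v)) !dot_affine w_sum x_w y_w.
have : dot (fun j => 1 * w j + -1 * v j) (fun j => 1 * w j + -1 * v j) = 0.
  by rewrite dot_comb2 (dotC w) v_w w_w; ring.
by move=> /dot_eq0 wv j; apply/eqP; rewrite -subr_eq0; apply/eqP; rewrite -(wv j); ring.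
Qed.

(* Cauchy-Schwarz, from the expansion of |<x,x> y - <x,y> x|^2 >= 0. *)
Lemma cauchy_schwarz x y : dot x y ^+ 2 <= dot x x * dot y y.
Proof.
have [x0 | x_neq0] := eqVneq (dot x x) 0.
  have -> : dot x y = 0 by rewrite /dot big1 // => j _; rewrite (dot_eq0 x0) mul0r.
  by rewrite x0 expr0n /= mul0r.
have x_gt0 : 0 < dot x x by rewrite lt_def x_neq0 dot_ge0.
have := dot_ge0 (fun j => dot x x * y j + - dot x y * x j).
rewrite dot_comb2 (dotC y) (_ : _ + _ = dot x x * (dot x x * dot y y - dot x y ^+ 2)).
  by rewrite pmulr_rge0 // subr_ge0.
by ring.
Qed.

Lemma dot_centred x y : (0 < n)%N ->
  dot (fun j => x j - (\sum_k x k) / n%:R) (fun j => y j - (\sum_k y k) / n%:R) =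
  dot x y - (\sum_k x k) * (\sum_k y k) / n%:R.
Proof.
move=> n_gt0; rewrite /dot; set X := \sum_k x k; set Y := \sum_k y k.
rewrite (eq_bigr (fun j => x j * y j - (Y / n%:R) * x j - (X / n%:R) * y j
   + (X / n%:R) * (Y / n%:R))); last by move=> j _; ring.
rewrite !big_split /= !sumrN -!mulr_sumr -/X -/Y sumr_const card_ord -mulr_natr.
by field; rewrite pnatr_eq0 -lt0n.
Qed.

End DotProduct.

Section GramMatrices.
Variables (R : realFieldType) (n : nat).

Lemma gramP k (W : 'M[R]_(k, n)) (u : 'cV_k) (rho sigma : R) :
  W *m W^T = rho%:M + sigma *: (u *m u^T) <->
  (forall i l, dot (W i) (W l) = (if i == l then rho else 0) + sigma * (u i 0 * u l 0)).
Proof.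
have WWtE i l : (W *m W^T) i l = dot (W i) (W l).
  by rewrite mxE; apply: eq_bigr => j _; rewrite mxE.
have rhsE i l : (rho%:M + sigma *: (u *m u^T)) i l =
    (if i == l then rho else 0) + sigma * (u i 0 * u l 0).
  by rewrite !mxE big_ord1 !mxE mulrb.
split=> [WWt i l | Wdot]; first by rewrite -WWtE WWt rhsE.
by apply/matrixP => i l; rewrite WWtE rhsE Wdot.
Qed.

Lemma row_sumsP k (W : 'M[R]_(k, n)) (u : 'cV_k) (s : R) :
  W *m const_mx 1 = s *: u <-> (forall i, \sum_j W i j = s * u i 0).
Proof.
have W1E i : (W *m (const_mx 1 : 'cV_n)) i 0 = \sum_j W i j.
  by rewrite mxE; apply: eq_bigr => j _; rewrite mxE mulr1.
split=> [W1 i | Wsum]; first by rewrite -W1E W1 mxE.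
by apply/colP => i; rewrite W1E Wsum mxE.
Qed.

Lemma gram_col_mx k p (W : 'M[R]_(k, n)) (Z : 'M_(p, n)) : W *m Z^T = 0 ->
  col_mx W Z *m (col_mx W Z)^T = block_mx (W *m W^T) 0 0 (Z *m Z^T).
Proof.
move=> WZt; have ZWt : Z *m W^T = 0 by rewrite -[Z]trmxK -trmx_mul WZt trmx0.
by rewrite tr_col_mx mul_col_row WZt ZWt.
Qed.

Lemma row_sums_col_mx k p (W : 'M[R]_(k, n)) (Z : 'M_(p, n)) (u : 'cV_k) (s : R) :
  W *m const_mx 1 = s *: u -> Z *m const_mx 1 = 0 :> 'cV_p ->
  col_mx W Z *m const_mx 1 = s *: col_mx u 0.
Proof. by move=> W1 Z1; rewrite mul_col_mx W1 Z1 scale_col_mx scaler0. Qed.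

Lemma unit_col_mx k p (u : 'cV[R]_k) :
  u^T *m u = 1%:M -> (col_mx u (0 : 'cV_p))^T *m col_mx u 0 = 1%:M.
Proof. by move=> uu; rewrite tr_col_mx mul_row_col uu trmx0 mul0mx addr0. Qed.

End GramMatrices.

(* A matrix rho I + sigma u u^T with u a unit vector is invertible when rho and
   sigma + rho are: its inverse is rho^-1 (I - sigma / (sigma + rho) u u^T). *)
Lemma gram_unit (F : fieldType) k (u : 'cV[F]_k) (rho sigma : F) :
  u^T *m u = 1%:M -> rho != 0 -> sigma + rho != 0 ->
  rho%:M + sigma *: (u *m u^T) \in unitmx.
Proof.
move=> uu rho0 sr0; set P := u *m u^T.
have PP : P *m P = P by rewrite mulmxA -(mulmxA u) uu mulmx1.
pose c := sigma / (sigma + rho).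
suff /mulmx1_unit[] : (rho%:M + sigma *: P) *m (rho^-1 *: (1%:M - c *: P)) = 1%:M by [].
rewrite -scalemxAr mulmxBr mulmx1 -scalemxAr mulmxDl mul_scalar_mx -scalemxAl PP.
have -> : c *: (rho *: P + sigma *: P) = sigma *: P.
  by rewrite -scalerDl scalerA /c [rho + _]addrC divfK.
by rewrite addrK scale_scalar_mx mulVf.
Qed.

Section Lifts.
Variables (R : rcfType) (n : nat) (al be : 'I_n -> R) (g : R).

Definition configured k (W : 'M[R]_(k, n)) (u : 'cV_k) (rho sigma : R) :=
  [/\ u^T *m u = 1%:M, 0 < rho, 0 < sigma + rho, g = sigma / (sigma + rho) &
      W *m W^T = rho%:M + sigma *: (u *m u^T) /\
      W *m const_mx 1 = Num.sqrt (n%:R * (sigma + rho)) *: u].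

(* Lifts are full, since their Gram matrix is invertible. *)
Lemma lift_full N (W : 'M[R]_(N, n)) : is_lift al be g W -> \rank W = N.
Proof.
case=> _ [_ [u [rho [sigma [uu rho_gt0 sr_gt0 _ [WWt _]]]]]].
have : W *m W^T \in unitmx by rewrite WWt gram_unit ?lt0r_neq0.
move=> /mxrank_unit WWt_rank; apply/eqP; rewrite eqn_leq rank_leq_row /=.
by rewrite -{1}WWt_rank mxrankM_maxl.
Qed.

Lemma lift_col_mx k p (W : 'M[R]_(k, n)) (Z : 'M_(p, n)) (u : 'cV_k) (rho sigma : R) :
  (1 < k)%N ->
  (forall i j, val i = 0%N -> W i j = al j) -> (forall i j, val i = 1%N -> W i j = be j) ->
  configured W u rho sigma ->
  W *m Z^T = 0 -> Z *m Z^T = rho%:M -> Z *m const_mx 1 = 0 :> 'cV_p ->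
  is_lift al be g (col_mx W Z).
Proof.
move=> k_gt1 W0 W1 [uu rho_gt0 sr_gt0 g_ratio [WWt Wsum]] WZt ZZt Zsum.
have top (r : nat) (X : 'I_n -> R) : (r < k)%N -> (forall i j, val i = r -> W i j = X j) ->
    forall i j, val i = r -> col_mx W Z i j = X j.
  move=> r_lt_k Wr i j ir; rewrite mxE; case: splitP => [i' /= ii' | i' /= ii'].
    by apply: Wr; rewrite -ir; exact: esym ii'.
  by move: ir r_lt_k; rewrite /= ii' => <-; rewrite ltnNge leq_addr.
split; first exact: top (ltnW k_gt1) W0.
split; first exact: top k_gt1 W1.
exists (col_mx u 0), rho, sigma; split=> //; first exact: unit_col_mx.
split; last exact: row_sums_col_mx.
rewrite gram_col_mx // WWt ZZt tr_col_mx mul_col_row trmx0 !mulmx0 !mul0mx.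
by rewrite (scalar_mx_block k p) scale_block_mx !scaler0 add_block_mx !addr0.
Qed.

End Lifts.

(* By
   induction on p, adding each time a normalised vector of the kernel. *)
Lemma orthogonal_completion (R : rcfType) n m p (Y : 'M[R]_(m, n)) (c : R) :
  0 < c -> (\rank Y + p <= n)%N ->
  exists Z : 'M[R]_(p, n), Y *m Z^T = 0 /\ Z *m Z^T = c%:M.
Proof.
move=> c_gt0; elim: p => [|p IH] rank_le.
  by exists 0; rewrite trmx0 mulmx0; split=> //; apply/matrixP => [[]].
have [Z [YZt ZZt]] : exists Z : 'M[R]_(p, n), Y *m Z^T = 0 /\ Z *m Z^T = c%:M.
  by apply: IH; rewrite (leq_trans _ rank_le) // addnS.
have rankYZ_lt : (\rank (col_mx Y Z) < n)%N.
  apply: leq_trans rank_le; rewrite addnS ltnS -(addsmxE Y Z).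
  by rewrite (leq_trans (mxrank_adds_leqif Y Z)) // leq_add2l rank_leq_row.
have [v v_ker v_neq0] : exists2 v : 'rV_n, (v <= kermx (col_mx Y Z)^T)%MS & v != 0.
  apply/rowV0Pn; rewrite -mxrank_eq0 mxrank_ker mxrank_tr subn_eq0 -ltnNge.
  exact: rankYZ_lt.
have /eqP : col_mx Y Z *m v^T = 0.
  by rewrite -[col_mx Y Z]trmxK -trmx_mul; move: v_ker; rewrite sub_kermx => /eqP ->; rewrite trmx0.
rewrite mul_col_mx col_mx_eq0 => /andP[/eqP Yvt /eqP Zvt].
pose nv := dot (v 0) (v 0).
have nv_gt0 : 0 < nv.
  rewrite lt_def dot_ge0 andbT; move: v_neq0; apply: contra_neq => /dot_eq0 v0.
  by apply/rowP => j; rewrite v0 mxE.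
pose w := (Num.sqrt c / Num.sqrt nv) *: v.
have wwt : w *m w^T = c%:M.
  apply/matrixP => i l; rewrite !ord1 /w linearZ /= -scalemxAl -scalemxAr.
  have vvt : \sum_j v 0 j * v^T j 0 = nv by apply: eq_bigr => j _; rewrite mxE.
  by rewrite !mxE vvt mulrA -expr2 expr_div_n !sqr_sqrtr ?ltW // divfK ?lt0r_neq0.
have wZt : w *m Z^T = 0 by rewrite -scalemxAl -[v]trmxK -trmx_mul Zvt trmx0 scaler0.
rewrite -[p.+1]add1n; exists (col_mx w Z); split.
  by rewrite tr_col_mx mul_mx_row /w linearZ /= -scalemxAr Yvt YZt scaler0 row_mx0.
by rewrite gram_col_mx // wwt ZZt -scalar_mx_block.
Qed.

Section Moments.
Variables (R : rcfType) (n : nat) (al be : 'I_n -> R) (g : R).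
Hypotheses (n_ge3 : (3 <= n)%N) (g_lt1 : g < 1)
  (z_neq0 : exists l, al l != 0 \/ be l != 0)
  (hyp : cscale (g / n%:R) (cmul (csum al be) (csum al be)) = csumsq al be).

Definition Sa := \sum_l al l.
Definition Sb := \sum_l be l.
Definition Qa := dot al al.
Definition Qb := dot be be.
Definition Pab := dot al be.

Definition rho0 := 1/2 * (\sum_l cnorm2 (zof al be l))
                   - g / (2 * n%:R) * cnorm2 (csum al be).
Definition sigma0 := g * rho0 / (1 - g).
Definition s0 := Num.sqrt (n%:R * (sigma0 + rho0)).
Definition u1 := (\sum_l al l) / s0.
Definition u2 := (\sum_l be l) / s0.
Definition u3 := Num.sqrt (1 - u1 ^+ 2 - u2 ^+ 2).

Lemma n_gt0 : 0 < n%:R :> R.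
Proof. by rewrite ltr0n (leq_trans _ n_ge3). Qed.

Lemma n_neq0 : n%:R != 0 :> R.
Proof. by rewrite lt0r_neq0 ?n_gt0. Qed.

Lemma one_sub_g_gt0 : 0 < 1 - g.
Proof. by rewrite subr_gt0. Qed.

Lemma sum_cnorm2 : \sum_l cnorm2 (zof al be l) = Qa + Qb.
Proof. by rewrite -big_split; apply: eq_bigr => l _; rewrite /cnorm2 !expr2. Qed.

Lemma cnorm2_csum : cnorm2 (csum al be) = Sa * Sa + Sb * Sb.
Proof. by rewrite /cnorm2 !expr2. Qed.

Lemma hyp_re : Qa - Qb = g / n%:R * (Sa * Sa - Sb * Sb).
Proof. by rewrite /Qa /Qb /dot -sumrB; have /= <- := congr1 fst hyp. Qed.

Lemma hyp_im : Pab = g / n%:R * (Sa * Sb).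
Proof.
have /= hyp2 := congr1 snd hyp.
have two_neq0 : 2 != 0 :> R by rewrite pnatr_eq0.
apply: (mulfI two_neq0); rewrite mulr_sumr.
transitivity (g / n%:R * (Sa * Sb + Sb * Sa)); last by ring.
by rewrite hyp2; apply: eq_bigr => l _ /=; ring.
Qed.

Lemma rho0E : rho0 = (Qa + Qb) / 2 - g / (2 * n%:R) * (Sa * Sa + Sb * Sb).
Proof. by rewrite /rho0 sum_cnorm2 cnorm2_csum mul1r mulrC. Qed.

Lemma norm_gt0 : 0 < Qa + Qb.
Proof.
rewrite lt_def addr_ge0 ?dot_ge0 // andbT paddr_eq0 ?dot_ge0 //.
apply/negP => /andP[/eqP /dot_eq0 al0 /eqP /dot_eq0 be0].
by case: z_neq0 => l; rewrite al0 be0 eqxx; case.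
Qed.

(* The key inequality behind rho > 0 and |(u1, u2)| <= 1.  The centred vectors
   a = al - Sa/n and b = be - Sb/n satisfy, by the hypothesis,
   |a|^2 - |b|^2 = (g-1)/n (Sa^2 - Sb^2) and <a,b> = (g-1)/n Sa Sb, so that
   Cauchy-Schwarz  <a,b>^2 <= |a|^2 |b|^2  gives |a|^2 + |b|^2 >= (1-g)/n X
   where X = Sa^2 + Sb^2. *)
Lemma moment_bound : (2 - g) * (Sa * Sa + Sb * Sb) <= n%:R * (Qa + Qb).
Proof.
have n_pos : (0 < n)%N by apply: leq_trans n_ge3.
pose a j := al j - Sa / n%:R; pose b j := be j - Sb / n%:R.
have aa : dot a a = Qa - Sa * Sa / n%:R by apply: dot_centred.
have bb : dot b b = Qb - Sb * Sb / n%:R by apply: dot_centred.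
have ab : dot a b = (g - 1) / n%:R * (Sa * Sb).
  by rewrite dot_centred // -/Pab -/Sa -/Sb hyp_im; field; apply: n_neq0.
have aa_bb : dot a a - dot b b = (g - 1) / n%:R * (Sa * Sa - Sb * Sb).
  rewrite aa bb (_ : _ - _ = Qa - Qb - (Sa * Sa - Sb * Sb) / n%:R); last by ring.
  by rewrite hyp_re; field; apply: n_neq0.
have CS := cauchy_schwarz a b; have a_ge0 := dot_ge0 a; have b_ge0 := dot_ge0 b.
set X := Sa * Sa + Sb * Sb.
set M := (1 - g) / n%:R * X.
have X_ge0 : 0 <= X by rewrite /X -!expr2 addr_ge0 ?sqr_ge0.
have M_ge0 : 0 <= M by rewrite /M mulr_ge0 // divr_ge0 ?ltW ?one_sub_g_gt0 ?n_gt0.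
have M2 : M ^+ 2 = (dot a a - dot b b) ^+ 2 + 4 * dot a b ^+ 2.
  by rewrite aa_bb ab /M /X; field; apply: n_neq0.
have M_le : M <= dot a a + dot b b by nra.
rewrite -subr_ge0 (_ : _ - _ = n%:R * (dot a a + dot b b - M)).
  by rewrite mulr_ge0 ?subr_ge0 // ltW ?n_gt0.
by rewrite aa bb /M /X; field; apply: n_neq0.
Qed.

Lemma rho0_gt0 : 0 < rho0.
Proof.
have := moment_bound; have := norm_gt0; have := n_neq0; have := n_gt0.
rewrite rho0E; set X := _ + _ * _; set T := Qa + Qb; move: (n%:R) => m m_gt0 m_neq0 T_gt0.
have X_ge0 : 0 <= X by rewrite /X -!expr2 addr_ge0 ?sqr_ge0.
rewrite (_ : T / 2 - _ = (m * T - g * X) / (2 * m)); last by field.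
move=> bound; rewrite divr_gt0 ?mulr_gt0 //.
have mT_gt0 : 0 < m * T by rewrite mulr_gt0.
have X_le : X <= m * T by have := mulr_ge0 (ltW one_sub_g_gt0) X_ge0; lra.
have [g_le0 | g_gt0] := lerP g 0.
  by have := mulr_le0_ge0 g_le0 X_ge0; lra.
have := ler_wpM2l (ltW g_gt0) X_le; have := mulr_gt0 one_sub_g_gt0 mT_gt0; lra.
Qed.

Lemma sigma_rho : sigma0 + rho0 = rho0 / (1 - g).
Proof. by rewrite /sigma0; field; rewrite lt0r_neq0 ?one_sub_g_gt0. Qed.

Lemma sr_gt0 : 0 < sigma0 + rho0.
Proof. by rewrite sigma_rho divr_gt0 ?rho0_gt0 ?one_sub_g_gt0. Qed.

Lemma g_ratio : g = sigma0 / (sigma0 + rho0).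
Proof.
by rewrite sigma_rho /sigma0; field; rewrite !lt0r_neq0 ?rho0_gt0 ?one_sub_g_gt0.
Qed.

Lemma s0_gt0 : 0 < s0.
Proof. by rewrite sqrtr_gt0 mulr_gt0 ?n_gt0 ?sr_gt0. Qed.

Lemma s0_sqr : s0 ^+ 2 = n%:R * (sigma0 + rho0).
Proof. by rewrite sqr_sqrtr // mulr_ge0 ?ltW ?n_gt0 ?sr_gt0. Qed.

Ltac nonzero := rewrite ?n_neq0 ?(lt0r_neq0 s0_gt0) ?(lt0r_neq0 sr_gt0)
  ?(lt0r_neq0 rho0_gt0) ?(lt0r_neq0 one_sub_g_gt0).

Lemma Sa_s : Sa = s0 * u1.
Proof. by rewrite /u1 mulrC divfK; nonzero. Qed.

Lemma Sb_s : Sb = s0 * u2.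
Proof. by rewrite /u2 mulrC divfK; nonzero. Qed.

Lemma sigma_sqr (x : R) : sigma0 * (x / s0) ^+ 2 = g / n%:R * x ^+ 2.
Proof. by rewrite expr_div_n s0_sqr {1}g_ratio; field; nonzero. Qed.

Lemma Qa_s : Qa = rho0 + sigma0 * u1 ^+ 2.
Proof.
rewrite /u1 sigma_sqr -/Sa rho0E; apply/eqP; rewrite -subr_eq0; apply/eqP.
transitivity ((Qa - Qb - g / n%:R * (Sa * Sa - Sb * Sb)) / 2); first by field; nonzero.
by rewrite hyp_re subrr mul0r.
Qed.

Lemma Qb_s : Qb = rho0 + sigma0 * u2 ^+ 2.
Proof.
rewrite /u2 sigma_sqr -/Sb rho0E; apply/eqP; rewrite -subr_eq0; apply/eqP.
transitivity ((Qb - Qa + g / n%:R * (Sa * Sa - Sb * Sb)) / 2); first by field; nonzero.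
by rewrite -opprB hyp_re addNr mul0r.
Qed.

Lemma Pab_s : Pab = sigma0 * (u1 * u2).
Proof.
rewrite hyp_im /u1 /u2 -/Sa -/Sb.
rewrite (_ : sigma0 * _ = sigma0 * (Sa * Sb) / s0 ^+ 2); last by field; nonzero.
by rewrite s0_sqr {1}g_ratio; field; nonzero.
Qed.

(* |(u1, u2)|^2 = X / s^2 where X = Sa^2 + Sb^2 and
   s^2 = (n (Qa + Qb) - g X) / (2 (1 - g)), so the key inequality says exactly
   that u1^2 + u2^2 <= 1, strictly in the nondegenerate case. *)
Lemma u12_sqr : u1 ^+ 2 + u2 ^+ 2 = (Sa * Sa + Sb * Sb) / s0 ^+ 2.
Proof. by rewrite /u1 /u2 !expr_div_n -mulrDl !expr2. Qed.

Lemma s0_sqrE : s0 ^+ 2 = (n%:R * (Qa + Qb) - g * (Sa * Sa + Sb * Sb)) / (2 * (1 - g)).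
Proof. by rewrite s0_sqr sigma_rho rho0E; field; nonzero. Qed.

Lemma u12_le1 : u1 ^+ 2 + u2 ^+ 2 <= 1.
Proof.
rewrite u12_sqr ler_pdivrMr ?exprn_gt0 ?s0_gt0 // mul1r s0_sqrE.
rewrite ler_pdivlMr ?mulr_gt0 ?one_sub_g_gt0 //.
by have := moment_bound; lra.
Qed.

Lemma u12_lt1 : n%:R * (\sum_l cnorm2 (zof al be l)) + (g - 2) * cnorm2 (csum al be) != 0 ->
  u1 ^+ 2 + u2 ^+ 2 < 1.
Proof.
rewrite sum_cnorm2 cnorm2_csum => nondeg.
rewrite u12_sqr ltr_pdivrMr ?exprn_gt0 ?s0_gt0 // mul1r s0_sqrE.
rewrite ltr_pdivlMr ?mulr_gt0 ?one_sub_g_gt0 //.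
have : (2 - g) * (Sa * Sa + Sb * Sb) < n%:R * (Qa + Qb).
  rewrite lt_neqAle moment_bound andbT.
  by apply: contraNneq nondeg => eq; rewrite -eq; apply/eqP; ring.
lra.
Qed.

Lemma u3_sqr : u3 ^+ 2 = 1 - u1 ^+ 2 - u2 ^+ 2.
Proof. by rewrite sqr_sqrtr // -addrA -opprD subr_ge0 u12_le1. Qed.

Lemma u12_eq1 : u3 = 0 -> u1 ^+ 2 + u2 ^+ 2 = 1.
Proof. by move=> u3_0; have := u3_sqr; rewrite u3_0 expr0n /=; lra. Qed.

Definition uvec2 : 'cV[R]_2 := \col_i (if val i == 0%N then u1 else u2).
Definition uvec3 (x : R) : 'cV[R]_3 :=
  \col_i (if val i == 0%N then u1 else if val i == 1%N then u2 else x).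

Lemma unit_uvec2 : u1 ^+ 2 + u2 ^+ 2 = 1 -> uvec2^T *m uvec2 = 1%:M.
Proof.
move=> u12; apply/matrixP => i l; rewrite !ord1 !mxE !big_ord_recr big_ord0 /= !mxE /=.
by rewrite add0r -u12 !expr2.
Qed.

Lemma unit_uvec3 (x : R) : x ^+ 2 = 1 - u1 ^+ 2 - u2 ^+ 2 -> (uvec3 x)^T *m uvec3 x = 1%:M.
Proof.
move=> x2; apply/matrixP => i l; rewrite !ord1 !mxE !big_ord_recr big_ord0 /= !mxE /=.
by rewrite add0r -!expr2 x2 mulr1n; ring.
Qed.

Lemma gram_al_be :
  [/\ dot al al = rho0 + sigma0 * (u1 * u1), dot be be = rho0 + sigma0 * (u2 * u2),
      dot al be = sigma0 * (u1 * u2) & dot be al = sigma0 * (u2 * u1)].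
Proof.
rewrite -!expr2 -Qa_s -Qb_s -Pab_s; split=> //.
by rewrite dotC -/Pab Pab_s [u1 * _]mulrC.
Qed.

Definition Amat : 'M[R]_(3, n) := rows3 al be (fun _ => 1).
Definition rows2 : 'M[R]_(2, n) := rowsub (widen_ord (leqnSn 2)) Amat.

Lemma rows3_row (t : 'I_n -> R) (i : 'I_3) :
  rows3 al be t i =1 if val i == 0%N then al else if val i == 1%N then be else t.
Proof. by move=> j; rewrite mxE; case: ifP => // _; case: ifP. Qed.

Lemma rows2_row (i : 'I_2) : rows2 i =1 if val i == 0%N then al else be.
Proof. by move=> j; rewrite mxE rows3_row; case: i => [[|[|//]] ?]. Qed.

Lemma gram_rows2 : rows2 *m rows2^T = rho0%:M + sigma0 *: (uvec2 *m uvec2^T).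
Proof.
apply/gramP => i l; rewrite (eq_dot (rows2_row i) (rows2_row l)) !mxE.
have [al_al be_be al_be be_al] := gram_al_be.
by case: i => [[|[|//]] ?]; case: l => [[|[|//]] ?]; rewrite /= ?add0r.
Qed.

Lemma sums_rows2 : rows2 *m const_mx 1 = s0 *: uvec2.
Proof.
apply/row_sumsP => i; rewrite mxE -(eq_bigr _ (fun j _ => esym (rows2_row i j))).
by case: i => [[|[|//]] ?]; rewrite /= -?Sa_s -?Sb_s.
Qed.

Lemma configured_rows2 : u3 = 0 -> configured g rows2 uvec2 rho0 sigma0.
Proof.
move=> /u12_eq1 u12.
split; [exact: unit_uvec2 | exact: rho0_gt0 | exact: sr_gt0 | exact: g_ratio |].
by split; [exact: gram_rows2 | exact: sums_rows2].
Qed.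

(* t is an admissible third row with third coordinate x of u: its inner
   products with 1, al, be, t are those required of the third row of a lift
   with parameters rho, sigma and u = (u1, u2, x). *)
Definition third_row (t : 'I_n -> R) (x : R) :=
  [/\ \sum_j t j = s0 * x, dot al t = sigma0 * (u1 * x),
      dot be t = sigma0 * (u2 * x) & dot t t = rho0 + sigma0 * x ^+ 2].

Section ThirdRow.
Variables (t : 'I_n -> R) (x : R).
Hypothesis t_row : third_row t x.

Lemma gram_rows3 :
  rows3 al be t *m (rows3 al be t)^T = rho0%:M + sigma0 *: (uvec3 x *m (uvec3 x)^T).
Proof.
have [_ al_t be_t t_t] := t_row.
apply/gramP => i l; rewrite (eq_dot (rows3_row t i) (rows3_row t l)) !mxE.
have [al_al be_be al_be be_al] := gram_al_be.
have t_al : dot t al = sigma0 * (x * u1) by rewrite dotC al_t [x * _]mulrC.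
have t_be : dot t be = sigma0 * (x * u2) by rewrite dotC be_t [x * _]mulrC.
have t_t' : dot t t = rho0 + sigma0 * (x * x) by rewrite t_t expr2.
by case: i => [[|[|[|//]]] ?]; case: l => [[|[|[|//]]] ?]; rewrite /= ?add0r.
Qed.

Lemma sums_rows3 : rows3 al be t *m const_mx 1 = s0 *: uvec3 x.
Proof.
have [t_sum _ _ _] := t_row.
apply/row_sumsP => i; rewrite mxE -(eq_bigr _ (fun j _ => esym (rows3_row t i j))).
by case: i => [[|[|[|//]]] ?]; rewrite /= -?Sa_s -?Sb_s.
Qed.

Lemma configured_rows3 : x ^+ 2 = 1 - u1 ^+ 2 - u2 ^+ 2 ->
  configured g (rows3 al be t) (uvec3 x) rho0 sigma0.
Proof.
move=> x2; split; [exact: unit_uvec3 | exact: rho0_gt0 | exact: sr_gt0 | exact: g_ratio |].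
by split; [exact: gram_rows3 | exact: sums_rows3].
Qed.

End ThirdRow.

(* When u3 > 0, the third row of the lift in R^3: the combination of 1, al, be
   with coefficients (tc0, tc1, tc2) = y, having the prescribed moments. *)
Definition tc1 := - u1 / u3.
Definition tc2 := - u2 / u3.
Definition tc0 := s0 * u3 / n%:R + s0 * (u1 ^+ 2 + u2 ^+ 2) / (n%:R * u3).
Definition tmin (j : 'I_n) := tc0 + tc1 * al j + tc2 * be j.
Definition ycoef : 'cV[R]_3 :=
  \col_i (if val i == 0%N then tc1 else if val i == 1%N then tc2 else tc0).

Lemma tmin_third_row : 0 < u3 -> third_row tmin u3.
Proof.
move=> u3_gt0; have u3_neq0 := lt0r_neq0 u3_gt0; have s2 := s0_sqr; have u3s := u3_sqr.
have t_sum : \sum_j tmin j = s0 * u3.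
  rewrite sum_affine -/Sa -/Sb Sa_s Sb_s /tc0 /tc1 /tc2.
  by field: s2 u3s; rewrite n_neq0 u3_neq0.
have al_t : dot al tmin = sigma0 * (u1 * u3).
  rewrite dotC dot_affine -/Sa -/Qa dotC -/Pab Sa_s Qa_s Pab_s /tc0 /tc1 /tc2.
  by field: s2 u3s; rewrite n_neq0 u3_neq0.
have be_t : dot be tmin = sigma0 * (u2 * u3).
  rewrite dotC dot_affine -/Sb -/Qb -/Pab Sb_s Qb_s Pab_s /tc0 /tc1 /tc2.
  by field: s2 u3s; rewrite n_neq0 u3_neq0.
split=> //; rewrite {1}/tmin dot_affine t_sum al_t be_t /tc0 /tc1 /tc2.
by field: s2 u3s; rewrite n_neq0 u3_neq0.
Qed.

Definition Mcoef : 'M[R]_3 := \matrix_(i, k) (if val i == 2%N then ycoef k 0 else (i == k)%:R).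

Lemma rows3_tmin : rows3 al be tmin = Mcoef *m Amat.
Proof.
apply/matrixP => i j; rewrite !mxE !big_ord_recr big_ord0 /= !mxE /= add0r.
by case: i => [[|[|[|//]]] ?] /=; rewrite ?mul1r ?mul0r ?addr0 ?add0r // /tmin; ring.
Qed.

Lemma tmin_col : \col_j tmin j = Amat^T *m ycoef.
Proof.
apply/colP => j; rewrite !mxE !big_ord_recr big_ord0 /= !mxE /= add0r /tmin.
by ring.
Qed.

Lemma ortho_ones p (Z : 'M_(p, n)) : Amat *m Z^T = 0 -> Z *m const_mx 1 = 0 :> 'cV_p.
Proof.
move=> AZt; apply/colP => k; rewrite !mxE.
transitivity ((Amat *m Z^T) i2 k); last by rewrite AZt mxE.
by rewrite mxE; apply: eq_bigr => j _; rewrite !mxE /= mulr1 mul1r.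
Qed.

Lemma ortho_rows2 p (Z : 'M_(p, n)) : Amat *m Z^T = 0 -> rows2 *m Z^T = 0.
Proof.
by move=> AZt; rewrite mul_rowsub_mx AZt; apply/matrixP => i k; rewrite !mxE.
Qed.

(* When u3 = 0, the vector d = c + u1 al + u2 be (with c = -s/n) has zero inner
   product with 1, al and be, hence is zero: the rows of A are dependent. *)
Lemma rankA_le2 : u3 = 0 -> (\rank Amat <= 2)%N.
Proof.
move=> /u12_eq1 u12; have s2 := s0_sqr.
have u1_sqr : u1 ^+ 2 = 1 - u2 ^+ 2 by rewrite -u12; ring.
pose c := - s0 / n%:R; pose d j := c + u1 * al j + u2 * be j.
have d_sum : \sum_j d j = 0.
  by rewrite sum_affine -/Sa -/Sb Sa_s Sb_s /c; field: u1_sqr; rewrite n_neq0.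
have d_al : dot al d = 0.
  rewrite dotC dot_affine -/Sa -/Qa dotC -/Pab Sa_s Qa_s Pab_s /c.
  by field: s2 u1_sqr; rewrite n_neq0.
have d_be : dot be d = 0.
  rewrite dotC dot_affine -/Sb -/Qb -/Pab Sb_s Qb_s Pab_s /c.
  by field: s2 u1_sqr; rewrite n_neq0.
have d0 : forall j, d j = 0.
  by apply: dot_eq0; rewrite {1}/d dot_affine d_sum d_al d_be; ring.
pose y : 'rV[R]_3 := \row_i (if val i == 0%N then u1 else if val i == 1%N then u2 else c).
have yA : y *m Amat = 0.
  apply/rowP => j; rewrite !mxE !big_ord_recr big_ord0 /= !mxE /= add0r -(d0 j) /d.
  by ring.
have y_neq0 : y != 0.
  apply: contra_neq (oner_neq0 R) => y0; rewrite -u12.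
  have /rowP y0' := y0; have := y0' i0; have := y0' i1.
  by rewrite !mxE /= => -> ->; rewrite expr0n addr0.
rewrite leqNgt; apply: contra y_neq0 => rank3.
by rewrite -(mulmx_free_eq0 y (_ : row_free Amat)) ?yA // /row_free eqn_leq rank_leq_row.
Qed.

(* Existence of full lifts in R^N: the rows al, be (and tmin when u3 > 0) are
   completed by orthogonal rows of squared norm rho, orthogonal to A. *)
Lemma exists_lift N : (3 <= N <= n)%N -> exists W : 'M[R]_(N, n), is_full_lift al be g W.
Proof.
case/andP => N_ge3 N_le_n.
suff [W W_lift] : exists W : 'M[R]_(N, n), is_lift al be g W.
  by exists W; split; last exact: lift_full W_lift.
have [u3_gt0 | u3_0] : 0 < u3 \/ u3 = 0.
  by have := sqrtr_ge0 (1 - u1 ^+ 2 - u2 ^+ 2); rewrite le_eqVlt => /orP[/eqP|]; auto.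
- have rank_le : (\rank Amat + (N - 3) <= n)%N.
    by rewrite (leq_trans _ N_le_n) // -{2}(subnKC N_ge3) leq_add2r rank_leq_row.
  have [Z [AZt ZZt]] := orthogonal_completion rho0_gt0 rank_le.
  rewrite -(subnKC N_ge3); exists (col_mx (rows3 al be tmin) Z).
  apply: (lift_col_mx (u := uvec3 u3) (rho := rho0) (sigma := sigma0)) => //;
    last exact: ortho_ones.
  + by move=> i j i0; rewrite mxE i0.
  + by move=> i j i1; rewrite mxE i1.
  + exact: configured_rows3 (tmin_third_row u3_gt0) u3_sqr.
  + by rewrite rows3_tmin -mulmxA AZt mulmx0.
- have N_ge2 : (2 <= N)%N by apply: ltnW.
  have rank_le : (\rank Amat + (N - 2) <= n)%N.
    by rewrite (leq_trans _ N_le_n) // -{2}(subnKC N_ge2) leq_add2r rankA_le2.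
  have [Z [AZt ZZt]] := orthogonal_completion rho0_gt0 rank_le.
  rewrite -(subnKC N_ge2); exists (col_mx rows2 Z).
  apply: (lift_col_mx (u := uvec2) (rho := rho0) (sigma := sigma0)) => //;
    last exact: ortho_ones.
  + by move=> i j i0; rewrite rows2_row i0.
  + by move=> i j i1; rewrite rows2_row i1.
  + exact: configured_rows2 u3_0.
  + exact: ortho_rows2.
Qed.

Lemma params_unique (rho sigma v1 v2 : R) :
  0 < rho -> 0 < sigma + rho -> g = sigma / (sigma + rho) ->
  Qa = rho + sigma * v1 ^+ 2 -> Qb = rho + sigma * v2 ^+ 2 ->
  Sa = Num.sqrt (n%:R * (sigma + rho)) * v1 -> Sb = Num.sqrt (n%:R * (sigma + rho)) * v2 ->
  rho = rho0 /\ sigma = sigma0.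
Proof.
move=> rho_gt0 sr_gt0' g_eq Qa_eq Qb_eq Sa_eq Sb_eq.
have s2 : Num.sqrt (n%:R * (sigma + rho)) ^+ 2 = n%:R * (sigma + rho).
  by rewrite sqr_sqrtr // mulr_ge0 ?ltW ?n_gt0.
have rho_eq : rho = rho0.
  rewrite rho0E Qa_eq Qb_eq Sa_eq Sb_eq g_eq.
  by field: s2; rewrite n_neq0 lt0r_neq0.
split=> //; rewrite /sigma0 -rho_eq g_eq.
by field; rewrite [_ - sigma]addrC addKr !lt0r_neq0.
Qed.

Lemma third_row_sign (t : 'I_n -> R) (x e : R) : e ^+ 2 = 1 ->
  third_row t x -> third_row (fun j => e * t j) (e * x).
Proof.
move=> e2 [t_sum al_t be_t t_t]; split.
- by rewrite -mulr_sumr t_sum; ring.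
- by rewrite dotZr al_t; ring.
- by rewrite dotZr be_t; ring.
- by rewrite dotZr dotC dotZr t_t; ring: e2.
Qed.

(* When u3 > 0, the admissible third rows with x = e u3 (e = +-1) reduce to
   e tmin, which lies in the span of 1, al, be. *)
Lemma third_row_unique (t : 'I_n -> R) (e : R) : 0 < u3 -> e ^+ 2 = 1 ->
  third_row t (e * u3) -> t =1 (fun j => e * tmin j).
Proof.
move=> u3_gt0 e2 [t_sum al_t be_t t_t].
have [et_sum al_et be_et et_et] := third_row_sign e2 (tmin_third_row u3_gt0).
apply: (@affine_norm_unique R n (e * tc0) (e * tc1) (e * tc2) al be).
- by move=> j; rewrite /tmin mulrDr mulrDr !mulrA.
- by rewrite t_sum et_sum.
- by rewrite al_t al_et.
- by rewrite be_t be_et.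
- by rewrite t_t et_et.
Qed.

Lemma lift3_third_row (W : 'M[R]_(3, n)) : is_lift al be g W ->
  exists2 e : R, (e = 1 \/ e = -1) & third_row (W i2) (e * u3).
Proof.
case=> W0 [W1 [u [rho [sigma [uu rho_gt0 sr_gt0' g_eq [/gramP WW /row_sumsP Wsum]]]]]].
have W0' : W i0 =1 al by move=> j; apply: W0.
have W1' : W i1 =1 be by move=> j; apply: W1.
have Sa_u : Sa = Num.sqrt (n%:R * (sigma + rho)) * u i0 0.
  by rewrite -Wsum; apply: eq_bigr => j _; rewrite W0'.
have Sb_u : Sb = Num.sqrt (n%:R * (sigma + rho)) * u i1 0.
  by rewrite -Wsum; apply: eq_bigr => j _; rewrite W1'.
have [rho_eq sigma_eq] : rho = rho0 /\ sigma = sigma0.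
  apply: (params_unique rho_gt0 sr_gt0' g_eq _ _ Sa_u Sb_u).
    by rewrite /Qa -(eq_dot W0' W0') WW eqxx expr2.
  by rewrite /Qb -(eq_dot W1' W1') WW eqxx expr2.
subst rho sigma.
have u_i0 : u i0 0 = u1 by rewrite /u1 -/Sa Sa_u -/s0 mulrC mulKf ?lt0r_neq0 ?s0_gt0.
have u_i1 : u i1 0 = u2 by rewrite /u2 -/Sb Sb_u -/s0 mulrC mulKf ?lt0r_neq0 ?s0_gt0.
have [e e_sign u_i2] : exists2 e : R, (e = 1 \/ e = -1) & u i2 0 = e * u3.
  have u_sqr : u1 ^+ 2 + u2 ^+ 2 + u i2 0 ^+ 2 = 1.
    move: uu => /matrixP /(_ 0 0); rewrite !mxE sum_ord3 !mxE u_i0 u_i1 -!expr2 => ->.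
    by rewrite mulr1n.
  by apply: sqr_eq_sign; rewrite u3_sqr -u_sqr; ring.
exists e => //; split.
- by rewrite Wsum u_i2.
- by rewrite -(eq_dot W0' (frefl _)) WW u_i0 u_i2 add0r.
- by rewrite -(eq_dot W1' (frefl _)) WW u_i1 u_i2 add0r.
- by rewrite WW eqxx u_i2 expr2.
Qed.

Lemma lift_rows3 (t : 'I_n -> R) (x : R) : x ^+ 2 = 1 - u1 ^+ 2 - u2 ^+ 2 ->
  third_row t x -> is_lift al be g (rows3 al be t).
Proof.
move=> x2 t_row; split; first by move=> i j i0; rewrite mxE i0.
split; first by move=> i j i1; rewrite mxE i1.
by exists (uvec3 x), rho0, sigma0; apply: configured_rows3.
Qed.

Section Nondegenerate.
Hypothesis nondeg :
  n%:R * (\sum_l cnorm2 (zof al be l)) + (g - 2) * cnorm2 (csum al be) != 0.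

Lemma u3_gt0 : 0 < u3.
Proof. by rewrite sqrtr_gt0 -addrA -opprD subr_gt0 u12_lt1. Qed.

(* A A^T is invertible: the configured matrix rows3 al be tmin = Mcoef A has
   the invertible Gram matrix Mcoef (A A^T) Mcoef^T. *)
Lemma AAt_unit : Amat *m Amat^T \in unitmx.
Proof.
have : rows3 al be tmin *m (rows3 al be tmin)^T \in unitmx.
  rewrite (gram_rows3 (tmin_third_row u3_gt0)) gram_unit ?unit_uvec3 ?u3_sqr //.
    by rewrite lt0r_neq0 ?rho0_gt0.
  by rewrite lt0r_neq0 ?sr_gt0.
rewrite rows3_tmin trmx_mul !mulmxA -(mulmxA Mcoef) !unitmxE !det_mulmx !unitfE.
by rewrite !mulf_eq0 !negb_or => /andP[/andP[_ ->]].
Qed.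

Lemma rankA : \rank Amat = 3%N.
Proof.
apply/eqP; rewrite eqn_leq rank_leq_row /=.
by rewrite -{1}(mxrank_unit AAt_unit) mxrankM_maxl.
Qed.

Definition bvec : 'cV[R]_3 := u3 *: (\col_(i < 3)
  (if val i == 0%N then sigma0 * u1 else if val i == 1%N then sigma0 * u2 else s0)).

(* tmin = A^T y solves A t = b, so it is the minimal norm solution
   A^T (A A^T)^-1 b. *)
Lemma tmin_minimal (j : 'I_n) : (Amat^T *m invmx (Amat *m Amat^T) *m bvec) j 0 = tmin j.
Proof.
have [t_sum al_t be_t _] := tmin_third_row u3_gt0.
have Atmin : bvec = Amat *m \col_j tmin j.
  apply/colP => i; rewrite !mxE; under eq_bigr do rewrite !mxE.
  case: i => [[|[|[|//]]] ?] /=.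
  - by rewrite -[RHS]/(dot al tmin) al_t; ring.
  - by rewrite -[RHS]/(dot be tmin) be_t; ring.
  - by rewrite (eq_bigr _ (fun j _ => mul1r _)) t_sum mulrC.
by rewrite Atmin tmin_col (mulmxA Amat) -mulmxA mulKmx ?AAt_unit // -tmin_col mxE.
Qed.

Lemma lift3P (W : 'M[R]_(3, n)) : is_lift al be g W <->
  exists2 e : R, (e = 1 \/ e = -1) & W = rows3 al be (fun j => e * tmin j).
Proof.
have sign_sqr (e : R) : e = 1 \/ e = -1 -> e ^+ 2 = 1.
  by case=> ->; rewrite ?sqrrN expr1n.
split=> [W_lift | [e e_sign ->]]; last first.
  apply: (lift_rows3 (x := e * u3)).
    by rewrite exprMn (sign_sqr e e_sign) mul1r u3_sqr.
  exact: third_row_sign (sign_sqr _ e_sign) (tmin_third_row u3_gt0).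
have [e e_sign t_row] := lift3_third_row W_lift.
exists e => //; have t_eq := third_row_unique u3_gt0 (sign_sqr _ e_sign) t_row.
case: W_lift => W0 [W1 _]; apply/matrixP => i j; rewrite rows3_row.
case: i => [[|[|[|//]]] ?] /=; [exact: W0 | exact: W1 |].
by rewrite -t_eq; congr (W _ j); apply: val_inj.
Qed.

End Nondegenerate.

End Moments.

Unset Implicit Arguments.
Set Strict Implicit.

Theorem theorem6p1 (R : rcfType) (n : nat) (al be : 'I_n -> R) (g : R) :
  (3 <= n)%N -> g < 1 ->
  (exists l : 'I_n, al l != 0 \/ be l != 0) ->
  cscale (g / n%:R) (cmul (csum al be) (csum al be)) = csumsq al be ->
  (forall N : nat, (3 <= N <= n)%N ->
     exists W : 'M[R]_(N, n), is_full_lift al be g W) /\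
  (n%:R * (\sum_l cnorm2 (zof al be l)) + (g - 2) * cnorm2 (csum al be) != 0 ->
   let rho := 1/2 * (\sum_l cnorm2 (zof al be l))
              - g / (2 * n%:R) * cnorm2 (csum al be) in
   let sigma := g * rho / (1 - g) in
   let s := Num.sqrt (n%:R * (sigma + rho)) in
   let u1 := (\sum_l al l) / s in
   let u2 := (\sum_l be l) / s in
   let u3 := Num.sqrt (1 - u1 ^+ 2 - u2 ^+ 2) in
   let A : 'M[R]_(3, n) := rows3 al be (fun _ => 1) in
   let b : 'cV[R]_3 := u3 *: (\col_(i < 3)
        (if val i == 0%N then sigma * u1 else if val i == 1%N then sigma * u2 else s)) in
   [/\ 0 < u3, \rank A = 3%N &
       forall W : 'M[R]_(3, n),
         is_lift al be g W <->
         exists2 e : R, (e = 1 \/ e = -1) &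
           W = rows3 al be (fun j => (e *: (A^T *m invmx (A *m A^T) *m b)) j 0)]).
Proof.
move=> n_ge3 g_lt1 z_neq0 hyp; split=> [N N_range | nondeg].
  exact: exists_lift.
move=> rho sigma s u1 u2 u3 A b; split.
- exact: (u3_gt0 n_ge3 g_lt1 z_neq0 hyp nondeg).
- exact: (rankA n_ge3 g_lt1 z_neq0 hyp nondeg).
- move=> W; rewrite (lift3P n_ge3 g_lt1 z_neq0 hyp nondeg).
  have rowsE (e : R) : rows3 al be (fun j => e * tmin al be g j) =
      rows3 al be (fun j => (e *: (A^T *m invmx (A *m A^T) *m b)) j 0).
    apply/matrixP => i j; rewrite !rows3_row; case: ifP => // _; case: ifP => // _.
    by rewrite mxE (tmin_minimal n_ge3 g_lt1 z_neq0 hyp nondeg).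
  by split=> -[e e_sign ->]; exists e; rewrite ?rowsE.
Qed.
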